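(* Let $n\ge1$ and $\Lambda\in\widetilde{\mathrm{NC}}^{\mathrm D}(n)$. Then $|\Lambda^+|=2n+2-|\Lambda|$ if $-1$ is the greatest element of its block in $\Lambda$, and $|\Lambda^+|=2n-|\Lambda|$ otherwise, where $|\cdot|$ denotes the number of blocks.
   Context: A set partition of a finite set $\mathcal X\subset\mathbb Z$ is a set of nonempty pairwise disjoint sets (blocks) with union $\mathcal X$. A pair $(i,j)$ is an arc of $\Lambda$ if $i<j$ lie in the same block and $j$ is the least element of that block greater than $i$; $\mathrm{Arc}(\Lambda)$ is the set of arcs. Let $[\pm n]=\{\pm1,\dots,\pm n\}$. $\Pi^{\mathrm D}(n)$ is the set of partitions $\Lambda$ of $[\pm n]$ such that $(i,j)\in\mathrm{Arc}(\Lambda)$ iff $(-j,-i)\in\mathrm{Arc}(\Lambda)$, and $\widetilde{\mathrm{NC}}^{\mathrm D}(n)$ is the set of $\Lambda\in\Pi^{\mathrm D}(n)$ such that whenever $(i,k),(j,l)\in\mathrm{Arc}(\Lambda)$ with $i<j<k<l$, we have $(i,k)=(-l,-j)$. For a partition $\Lambda$ of $\mathcal X$, $\Lambda^+$ is the partition of $\mathcal X$ with arc set $(\mathrm{Arc}(\Lambda)\setminus\mathcal S)\cup\mathcal T$, where $\mathcal S=\{(i,i+1):i\in\mathbb Z\}$ and $\mathcal T$ is the set of pairs $(i,i+1)\in\mathcal X\times\mathcal X$ with $i$ maximal in its block of $\Lambda$ and $i+1$ minimal in its block of $\Lambda$ (note $-1$ and $1$ are not of the form $i,i+1$). *)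

From HB Require Import structures.
From mathcomp Require Import all_boot all_order all_algebra.
From mathcomp Require Import finmap.
Set Implicit Arguments. Unset Strict Implicit. Unset Printing Implicit Defensive.
Import Order.TTheory GRing.Theory Num.Theory.
Local Open Scope ring_scope.
Local Open Scope fset_scope.

Definition spart := {fset {fset int}}.

Definition in_pm (n : nat) (x : int) : bool := (x != 0) && (`|x| <= n%:Z).

Definition is_partition (L : spart) (X : int -> bool) : Prop :=
  [/\ forall B, B \in L -> B != fset0,
      forall B C, B \in L -> C \in L -> B != C -> [disjoint B & C]
    & forall x, X x <-> exists2 B, B \in L & x \in B].

Definition is_arc (L : spart) (i j : int) : Prop :=
  exists2 B, B \in L &
    [/\ i \in B, j \in B, i < j & forall k, k \in B -> i < k -> j <= k].

Definition is_block_max (L : spart) (i : int) : Prop :=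
  exists2 B, B \in L & i \in B /\ (forall k, k \in B -> k <= i).
Definition is_block_min (L : spart) (i : int) : Prop :=
  exists2 B, B \in L & i \in B /\ (forall k, k \in B -> i <= k).

Definition in_PiD (n : nat) (L : spart) : Prop :=
  is_partition L (in_pm n) /\
  forall i j, is_arc L i j <-> is_arc L (- j) (- i).

Definition in_NCDt (n : nat) (L : spart) : Prop :=
  in_PiD n L /\
  forall i j k l, is_arc L i k -> is_arc L j l -> i < j -> j < k -> k < l ->
    (i, k) = (- l, - j).

(* The arc set of Lambda^+ : (Arc(L) \ S) u T, for L a partition of X. *)
Definition plus_arc (X : int -> bool) (L : spart) (i j : int) : Prop :=
  (is_arc L i j /\ j <> (i + 1)%R) \/
  [/\ j = (i + 1)%R, X i, X j, is_block_max L i & is_block_min L j].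

From HB Require Import structures.
From mathcomp Require Import all_boot all_order all_algebra.
From mathcomp Require Import finmap zify.
Import Order.TTheory GRing.Theory Num.Theory.
Set Implicit Arguments. Unset Strict Implicit. Unset Printing Implicit Defensive.
Local Open Scope fset_scope.
Local Open Scope ring_scope.

(* Count the blocks of a partition of [+-n] by their maxima for Lambda^+ and by
   their minima for Lambda. If x and x + 1 both lie in [+-n], then x is a block
   maximum of Lambda^+ exactly when x + 1 is not a block minimum of Lambda: an
   arc of Lambda leaving x and another one entering x + 1 would cross, and the
   only crossings allowed in NC^D would force x + 1 = -x. At the ends -1 and n
   of the runs -n..-1 and 1..n, Lambda^+ and Lambda have the same block maxima.
   Summing over both runs, and using that -n is a block minimum, n a block
   maximum, and (by the symmetry of Lambda) 1 is a block minimum iff -1 is a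
   block maximum, gives |Lambda^+| + |Lambda| = 2n + 2[-1 is a block maximum].
   Lambda^+ exists because its arc relation is increasing, functional and
   injective, and every such relation on a finite set is the arc relation of a
   partition, obtained by inserting the elements from the least one upwards. *)

Lemma count_uniq_has (T : eqType) (p : pred T) (s : seq T) :
  uniq s -> {in s &, forall a b, p a -> p b -> a = b} -> count p s = has p s.
Proof.
elim: s => [//|a s IH] /= /andP[nas us] p1.
rewrite IH //; last by move=> x y xs ys; apply: p1; rewrite inE ?xs ?ys orbT.
case pa: (p a); case: hasP => //= -[y ys py].
by move: nas; rewrite (p1 a y) ?inE ?eqxx ?ys ?orbT.
Qed.

Lemma has_extremum (T : eqType) (r : rel T) (s : seq T) :
  total r -> transitive r -> s != [::] -> exists2 x, x \in s & all (r x) s.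
Proof.
move=> r_tot r_tr s0; have := sort_sorted r_tot s.
case Es: (sort r s) => [|x t] srt.
  by move: s0; rewrite -size_eq0 -(size_sort r) Es.
have xs : x \in s by rewrite -(mem_sort r) Es mem_head.
exists x => //; rewrite -(perm_all _ (permEl (perm_sort r s))) Es /=.
by rewrite (order_path_min r_tr srt) andbT; case/orP: (r_tot x x).
Qed.

Lemma count_sum (T : Type) (p : pred T) (s : seq T) :
  count p s = (\sum_(x <- s) p x)%N.
Proof. by elim: s => [|a s IH]; rewrite ?big_nil ?big_cons //= IH. Qed.

Fixpoint iotaz (a : int) (m : nat) : seq int :=
  if m is m'.+1 then a :: iotaz (a + 1) m' else [::].

Lemma mem_iotaz a m x : (x \in iotaz a m) = (a <= x < a + m%:Z).
Proof. by elim: m a => [|m IH] a /=; rewrite ?inE ?IH; lia. Qed.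

Lemma path_iotaz b a m : b < a -> path <%R b (iotaz a m).
Proof. by elim: m a b => [|m IH] a b //= ->; rewrite IH //; lia. Qed.

Lemma path_iotaz_cat b a m c k :
  b < a -> a + m%:Z <= c -> path <%R b (iotaz a m ++ iotaz c k).
Proof.
elim: m a b => [|m IH] a b /= lt_ba le_amc; first by apply: path_iotaz; lia.
by rewrite lt_ba IH //; lia.
Qed.

Lemma count_iotaz_succ (f g : pred int) a m :
  (forall x, a <= x < a + m%:Z -> f x = ~~ g (x + 1)) ->
  (count f (iotaz a m.+1) + count g (iotaz a m.+1) = m + g a + f (a + m%:Z)%R)%N.
Proof.
elim: m a => [|m IH] a fg; first by rewrite /= addr0 !addn0 add0n addnC.
have := IH (a + 1) (fun x ax => fg x ltac:(lia)).
have -> : a + 1 + m%:Z = a + m.+1%:Z by lia.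
rewrite /= (fg a ltac:(lia)).
(* lia does not identify the differently elaborated copies of these terms *)
move: (count f _) (count g _) (f (a + 1)) (f (a + m.+1%:Z)) (g a) (g (a + 1)).
by move=> cf cg [] [] [] [] /=; lia.
Qed.

(** * Extremal elements and arcs of blocks *)

Definition block_extb (r : rel int) (Q : spart) (x : int) : bool :=
  has (fun B : {fset int} => (x \in B) && all (r x) B) Q.
Definition block_maxb := block_extb >=%R.
Definition block_minb := block_extb <=%R.

Lemma block_extP (r : rel int) (Q : spart) (x : int) :
  reflect (exists2 B, B \in Q & x \in B /\ forall k, k \in B -> r x k)
          (block_extb r Q x).
Proof.
apply: (iffP hasP) => -[B BQ].
  by case/andP=> xB /allP rx; exists B.
by case=> xB rx; exists B; rewrite // xB; apply/allP.
Qed.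

Lemma block_maxP Q x : reflect (is_block_max Q x) (block_maxb Q x).
Proof. exact: block_extP. Qed.

Lemma block_minP Q x : reflect (is_block_min Q x) (block_minb Q x).
Proof. exact: block_extP. Qed.

Definition block_arc (B : {fset int}) (i j : int) : Prop :=
  [/\ i \in B, j \in B, i < j & forall k, k \in B -> i < k -> j <= k].

Section Partition.
Variables (Q : spart) (X : int -> bool).
Hypothesis HQ : is_partition Q X.

Lemma block_eq B C x : B \in Q -> C \in Q -> x \in B -> x \in C -> B = C.
Proof.
case: HQ => _ disjQ _ BQ CQ xB xC; apply/eqP; apply/negPn/negP => /(disjQ _ _ BQ CQ).
by move/fdisjointP/(_ x xB); rewrite xC.
Qed.

Lemma block_exists x : X x -> exists2 B, B \in Q & x \in B.
Proof. by case: HQ => _ _ coverQ /coverQ. Qed.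

Lemma block_dom B x : B \in Q -> x \in B -> X x.
Proof. by case: HQ => _ _ coverQ BQ xB; apply/coverQ; exists B. Qed.

Lemma block_extbE r B x : B \in Q -> x \in B -> block_extb r Q x = all (r x) B.
Proof.
move=> BQ xB; apply/hasP/idP => [[C CQ /andP[xC]]|rx]; last by exists B; rewrite ?xB.
by rewrite (block_eq BQ CQ xB xC).
Qed.

Lemma arc_block B i j : B \in Q -> i \in B -> is_arc Q i j -> block_arc B i j.
Proof. by move=> BQ iB [C CQ [iC]]; rewrite (block_eq BQ CQ iB iC). Qed.

Lemma arc_dom i j : is_arc Q i j -> X i /\ X j.
Proof. by case=> B BQ [iB jB _ _]; split; apply: block_dom BQ _. Qed.

Lemma arc_functional i j j' : is_arc Q i j -> is_arc Q i j' -> j = j'.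
Proof.
move=> [B BQ [iB jB ij minj]] /(arc_block BQ iB) [_ j'B ij' minj'].
by apply/le_anti; rewrite minj' ?minj.
Qed.

Lemma arc_injective i i' j : is_arc Q i j -> is_arc Q i' j -> i = i'.
Proof.
move=> [B BQ [iB jB ij minj]] [C CQ [i'C jC i'j minj']].
move: i'C minj'; rewrite -(block_eq BQ CQ jB jC) => i'B minj'.
case: (ltgtP i i') => // lt_ii'.
  by have := minj _ i'B lt_ii'; rewrite leNgt i'j.
by have := minj' _ iB lt_ii'; rewrite leNgt ij.
Qed.

Lemma arc_outP x : X x -> (exists j, is_arc Q x j) <-> ~~ block_maxb Q x.
Proof.
case/block_exists=> B BQ xB; rewrite /block_maxb (block_extbE _ BQ xB) -has_predC.
split=> [[j /(arc_block BQ xB) [_ jB xj _]]|/hasP[k kB /= xk]].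
  by apply/hasP; exists j; rewrite //= -ltNge.
have /(has_extremum le_total le_trans) [j] : [seq k <- B | x < k] != [::].
  by rewrite -size_eq0 size_filter -lt0n -has_count; apply/hasP; exists k; rewrite // ltNge.
rewrite mem_filter => /andP[xj jB] /allP minj.
by exists j, B => //; split=> // y yB xy; apply: minj; rewrite mem_filter xy.
Qed.

Lemma arc_inP x : X x -> (exists i, is_arc Q i x) <-> ~~ block_minb Q x.
Proof.
case/block_exists=> B BQ xB; rewrite /block_minb (block_extbE _ BQ xB) -has_predC.
split=> [[i [C CQ [iC xC ix _]]]|/hasP[k kB /= kx]].
  move: iC; rewrite -(block_eq BQ CQ xB xC) => iB.
  by apply/hasP; exists i; rewrite //= -ltNge.
have ge_tot : total (>=%R : rel int) by move=> a b; exact: le_total.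
have ge_tr : transitive (>=%R : rel int) by move=> a b c /= ba cb; apply: le_trans cb ba.
have /(has_extremum ge_tot ge_tr) [i] : [seq k <- B | k < x] != [::].
  by rewrite -size_eq0 size_filter -lt0n -has_count; apply/hasP; exists k; rewrite // ltNge.
rewrite mem_filter => /andP[ix iB] /allP maxi.
exists i, B => //; split=> // y yB iy; rewrite leNgt; apply/negP => yx.
by have := maxi y; rewrite mem_filter yx yB => /(_ isT); rewrite /= leNgt iy.
Qed.

Lemma block_maxb_max x : X x -> (forall y, X y -> y <= x) -> block_maxb Q x.
Proof.
case/block_exists=> B BQ xB maxx; rewrite /block_maxb (block_extbE _ BQ xB).
by apply/allP => y yB; apply/maxx/(block_dom BQ yB).
Qed.

Lemma block_minb_min x : X x -> (forall y, X y -> x <= y) -> block_minb Q x.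
Proof.
case/block_exists=> B BQ xB minx; rewrite /block_minb (block_extbE _ BQ xB).
by apply/allP => y yB; apply/minx/(block_dom BQ yB).
Qed.

Lemma card_block_extb (r : rel int) (Xs : seq int) :
  total r -> transitive r -> antisymmetric r ->
  uniq Xs -> (forall x, X x = (x \in Xs)) -> #|` Q| = count (block_extb r Q) Xs.
Proof.
move=> r_tot r_tr r_anti uXs XsE.
pose extremal x (B : {fset int}) := (x \in B) && all (r x) B.
have block_extbE' x : block_extb r Q x = count (extremal x) Q :> nat.
  rewrite count_uniq_has ?fset_uniq //.
  by move=> B C BQ CQ /andP[xB _] /andP[xC _]; exact: block_eq BQ CQ xB xC.
rewrite count_sum; under eq_bigr do rewrite block_extbE' count_sum.
rewrite exchange_big /= card_fset_sum1; apply: eq_big_seq => B BQ.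
rewrite -count_sum count_uniq_has //; last first.
  by move=> a b _ _ /andP[aB /allP ra] /andP[bB /allP rb]; apply: r_anti; rewrite ra ?rb.
have [k kB] : exists k, k \in B by case: HQ => ne _ _; apply/fset0Pn/ne.
have /(has_extremum r_tot r_tr) [m mB rm] : (B : seq int) != [::].
  by apply/eqP => B0; rewrite -[k \in B]/(k \in (B : seq int)) B0 in kB.
suff -> : has (extremal^~ B) Xs by [].
by apply/hasP; exists m; rewrite /extremal ?mB // -XsE (block_dom BQ mB).
Qed.

Lemma card_block_max (Xs : seq int) :
  uniq Xs -> (forall x, X x = (x \in Xs)) -> #|` Q| = count (block_maxb Q) Xs.
Proof.
apply: card_block_extb => [a b|a b c /= ba cb|a b /andP[ba ab]].
- exact: le_total.
- exact: le_trans cb ba.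
- by apply: le_anti; apply/andP.
Qed.

Lemma card_block_min (Xs : seq int) :
  uniq Xs -> (forall x, X x = (x \in Xs)) -> #|` Q| = count (block_minb Q) Xs.
Proof. exact: card_block_extb le_total le_trans le_anti. Qed.

End Partition.

(** * Partitions with a prescribed arc relation *)

Lemma eq_is_partition (P : spart) (X Y : int -> bool) :
  X =1 Y -> is_partition P X -> is_partition P Y.
Proof. by move=> XY [ne disj cover]; split=> // x; rewrite -XY. Qed.

Lemma arc_fsetU1 (A : spart) (C : {fset int}) i j :
  is_arc (A `|` [fset C]) i j <-> is_arc A i j \/ block_arc C i j.
Proof.
split=> [[D]|[[D DA arcD]|arcC]].
- by rewrite in_fsetU in_fset1 => /orP[DA|/eqP->] arcD; [left; exists D | right].
- by exists D; rewrite // in_fsetU DA.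
- by exists C; rewrite // in_fsetU in_fset1 eqxx orbT.
Qed.

Lemma arc_fsetD1 (A : spart) (B : {fset int}) i j :
  B \in A \/ B = fset0 ->
  is_arc A i j <-> is_arc (A `\ B) i j \/ block_arc B i j.
Proof.
move=> BA; split=> [[D DA arcD]|[[D]|arcB]].
- by case: (eqVneq D B) => [<-|DB]; [right | left; exists D; rewrite // in_fsetD1 DB].
- by rewrite in_fsetD1 => /andP[_ DA] arcD; exists D.
- by case: BA => [BA|B0]; [exists B | move: arcB; rewrite B0 => -[]].
Qed.

Lemma block_arc_fset1U (B : {fset int}) m i j :
  (forall k, k \in B -> m < k) ->
  block_arc (m |` B) i j <->
  (i = m /\ j \in B /\ forall k, k \in B -> j <= k) \/ block_arc B i j.
Proof.
move=> ltmB.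
split.
  case; rewrite !in_fset1U => /orP[/eqP->|iB] /orP[/eqP->|jB] ij minj.
  - by rewrite ltxx in ij.
  - by left; split=> //; split=> // k kB; apply: minj; rewrite ?in_fset1U ?kB ?orbT ?ltmB.
  - by have := lt_trans (ltmB _ iB) ij; rewrite ltxx.
  - by right; split=> // k kB; apply: minj; rewrite in_fset1U kB orbT.
case=> [[-> [jB minj]]|[iB jB ij minj]].
  split; rewrite ?in_fset1U ?eqxx ?jB ?orbT ?ltmB //.
  by move=> k; rewrite in_fset1U => /orP[/eqP->|/minj //]; rewrite ltxx.
split; rewrite ?in_fset1U ?iB ?jB ?orbT // => k.
rewrite in_fset1U => /orP[/eqP->|/minj //]; by rewrite ltNge ltW ?ltmB.
Qed.

(* Taking B = fset0 adds m as a singleton block. *)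
Section InsertMin.
Variables (s : seq int) (m : int) (P : spart) (B : {fset int}).
Hypothesis lt_m_s : forall x, x \in s -> m < x.
Hypothesis HP : is_partition P (fun x => x \in s).
Hypothesis BP : B \in P \/ B = fset0.

Let B_s k : k \in B -> k \in s.
Proof. by case: BP => [|->]; [exact: (block_dom HP) | rewrite in_fset0]. Qed.

Lemma insert_min_partition :
  is_partition ((P `\ B) `|` [fset m |` B]) (fun x => x \in m :: s).
Proof.
have m_s : m \notin s by apply/negP => /lt_m_s; rewrite ltxx.
case: HP => ne disj cover; split.
- move=> C; rewrite in_fsetU in_fset1 in_fsetD1 => /orP[/andP[_ /ne]//|/eqP->].
  by apply/fset0Pn; exists m; rewrite in_fset1U eqxx.
- have disj_m C : C \in P `\ B -> [disjoint C & m |` B].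
    rewrite in_fsetD1 => /andP[CB CP]; apply/fdisjointP => x xC.
    rewrite in_fset1U negb_or; apply/andP; split.
      by apply: contraNneq m_s => <-; apply/cover; exists C.
    by case: BP => [/(disj _ _ CP) /(_ CB) /fdisjointP/(_ x xC) | ->].
  move=> C D; rewrite !in_fsetU !in_fset1 => /orP[CP|/eqP->] /orP[DP|/eqP->] CD.
  + by move: CP DP; rewrite !in_fsetD1 => /andP[_ CP] /andP[_ DP]; apply: disj.
  + exact: disj_m.
  + by rewrite fdisjoint_sym; apply: disj_m.
  + by rewrite eqxx in CD.
- move=> x; rewrite inE; split.
    case/orP=> [/eqP->|/cover[C CP xC]].
      by exists (m |` B); rewrite ?in_fsetU ?in_fset1 ?in_fset1U eqxx ?orbT.
    case: (eqVneq C B) => [CB|CB].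
      by exists (m |` B); rewrite ?in_fsetU ?in_fset1 ?in_fset1U -?CB ?eqxx ?xC orbT.
    by exists C; rewrite // in_fsetU in_fsetD1 CB CP.
  case=> C; rewrite in_fsetU in_fset1 in_fsetD1 => /orP[/andP[_ CP] xC|/eqP->].
    by apply/orP; right; apply/cover; exists C.
  by rewrite in_fset1U => /orP[->//|/B_s ->]; rewrite orbT.
Qed.

Lemma insert_min_arc i j :
  is_arc ((P `\ B) `|` [fset m |` B]) i j <->
  is_arc P i j \/ (i = m /\ j \in B /\ forall k, k \in B -> j <= k).
Proof.
rewrite arc_fsetU1 block_arc_fset1U; last by move=> k /B_s /lt_m_s.
by rewrite (arc_fsetD1 i j BP); tauto.
Qed.

End InsertMin.

Lemma exists_partition_of_arcs (s : seq int) (R : rel int) :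
  sorted <%R s ->
  (forall i j, R i j -> [/\ i \in s, j \in s & i < j]) ->
  (forall i j j', R i j -> R i j' -> j = j') ->
  (forall i i' j, R i j -> R i' j -> i = i') ->
  exists2 P : spart, is_partition P (fun x => x \in s) &
    forall i j, is_arc P i j <-> R i j.
Proof.
elim: s R => [|m s IH] R srt R_s R_fun R_inj.
  exists fset0; first by split=> [B|B C|x]; rewrite ?in_fset0 //; split=> // -[B].
  by move=> i j; split=> [[B]|/R_s[]]; rewrite ?in_fset0.
have lt_m_s : forall x, x \in s -> m < x.
  by apply/allP; apply: order_path_min srt; apply: lt_trans.
pose R' i j := R i j && (i != m).
have R'_s i j : R' i j -> [/\ i \in s, j \in s & i < j].
  case/andP=> /R_s[]; rewrite !inE => /orP[/eqP-> | i_s]; first by rewrite eqxx.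
  case/orP=> [/eqP-> ij|js ij]; last by [].
  by have := lt_trans (lt_m_s _ i_s) ij; rewrite ltxx.
have [P HP P_arcs] := IH R' (path_sorted srt) R'_s
  (fun i j j' h h' => R_fun i j j' (andP h).1 (andP h').1)
  (fun i i' j h h' => R_inj i i' j (andP h).1 (andP h').1).
have [B BP succ_m] : exists2 B, B \in P \/ B = fset0 &
    forall j, R m j <-> j \in B /\ forall k, k \in B -> j <= k.
  have Rm_s j : R m j -> j \in s.
    by case/R_s=> _; rewrite inE => /orP[/eqP->|//]; rewrite ltxx.
  case: (boolP (has (R m) s)) => [/hasP[j js Rmj]|noRm]; last first.
    exists fset0 => [|j]; first by right.
    split=> [Rmj|[]]; rewrite ?in_fset0 //.
    by case/negP: noRm; apply/hasP; exists j; rewrite ?Rm_s.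
  have [B BP jB] := block_exists HP js.
  have : block_minb P j.
    apply: contraT => /(arc_inP HP js).2 [i /P_arcs /andP[Rij]].
    by rewrite (R_inj _ _ _ Rij Rmj) eqxx.
  rewrite /block_minb (block_extbE HP _ BP jB) => /allP minj.
  exists B; first by left.
  move=> j'; split=> [/(R_fun _ _ _ Rmj) <- //|[j'B minj']].
  by have -> : j' = j by apply/le_anti; rewrite minj' ?minj.
exists ((P `\ B) `|` [fset m |` B]); first exact: insert_min_partition.
move=> i j; rewrite (insert_min_arc lt_m_s HP BP) P_arcs -succ_m /R'.
by case: (eqVneq i m) => [->|_]; rewrite ?andbF ?andbT; intuition; subst.
Qed.

Definition arcb (Q : spart) (i j : int) : bool :=
  has (fun B : {fset int} =>
    [&& i \in B, j \in B, i < j & all (fun k => (i < k) ==> (j <= k)) B]) Q.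

Lemma arcP Q i j : reflect (is_arc Q i j) (arcb Q i j).
Proof.
apply: (iffP hasP) => -[B BQ].
  by case/and4P=> iB jB ij /allP minj; exists B => //; split=> // k /minj/implyP.
case=> iB jB ij minj; exists B; rewrite // iB jB ij.
by apply/allP => k kB; apply/implyP/minj.
Qed.

Definition plus_arcb (X : int -> bool) (L : spart) (i j : int) : bool :=
  arcb L i j && (j != i + 1)
  || [&& j == i + 1, X i, X j, block_maxb L i & block_minb L j].

Lemma plus_arcP X L i j : reflect (plus_arc X L i j) (plus_arcb X L i j).
Proof.
apply: (iffP orP).
  case=> [/andP[/arcP a /eqP ne]|/and5P[/eqP ij Xi Xj /block_maxP mx /block_minP mn]].
    by left.
  by right.
case=> [[/arcP a /eqP ne]|[ij Xi Xj /block_maxP mx /block_minP mn]].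
  by left; rewrite a ne.
by right; rewrite Xi Xj mx mn ij eqxx.
Qed.

Lemma exists_plus_partition (L : spart) (X : int -> bool) (Xs : seq int) :
  is_partition L X -> sorted <%R Xs -> (forall x, X x = (x \in Xs)) ->
  exists2 P : spart, is_partition P X &
    forall i j, is_arc P i j <-> plus_arc X L i j.
Proof.
move=> HL srt XsE.
have [i j|i j j'|i i' j|P HP P_arcs] := @exists_partition_of_arcs Xs (plus_arcb X L) srt.
- case/plus_arcP=> [[a _]|[-> Xi Xj _ _]]; rewrite -!XsE.
    by have [Xi Xj] := arc_dom HL a; case: a => B _ [].
  by split=> //; lia.
- case/plus_arcP=> [[a _]|[-> Xi _ mx _]] /plus_arcP[[a' _]|[-> Xi' _ mx' _]] //.
  + exact (arc_functional HL a a').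
  + by have := (arc_outP HL Xi').1 (ex_intro _ j a); rewrite (introT (block_maxP _ _) mx').
  + by have := (arc_outP HL Xi).1 (ex_intro _ j' a'); rewrite (introT (block_maxP _ _) mx).
- case/plus_arcP=> [[a _]|[-> _ Xj _ mn]] /plus_arcP[[a' _]|[ij' _ Xj' _ mn']].
  + exact (arc_injective HL a a').
  + by have := (arc_inP HL Xj').1 (ex_intro _ i a); rewrite (introT (block_minP _ _) mn').
  + by have := (arc_inP HL Xj).1 (ex_intro _ i' a'); rewrite (introT (block_minP _ _) mn).
  + by move: ij'; lia.
exists P; first by apply: eq_is_partition HP => x; rewrite XsE.
by move=> i j; rewrite P_arcs; split=> /plus_arcP.
Qed.

(** * Counting the blocks of Lambda^+ *)

Section PlusPartition.
Variables (X : int -> bool) (L P : spart).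
Hypotheses (HL : is_partition L X) (HP : is_partition P X).
Hypothesis arcPE : forall i j, is_arc P i j <-> plus_arc X L i j.
Hypothesis arc_succ : forall x i j, is_arc L x j -> is_arc L i (x + 1) -> j = x + 1.

Lemma block_maxb_plus_succ x :
  X x -> X (x + 1) -> block_maxb P x = ~~ block_minb L (x + 1).
Proof.
move=> Xx Xx1; apply: negb_inj; rewrite negbK; apply/idP/idP.
  move/(arc_outP HP Xx).2 => [j /arcPE [[a ne]|[-> _ _ _ /block_minP //]]].
  by apply: contraT => /(arc_inP HL Xx1).2 [i /(arc_succ a) /ne].
move=> mn; apply: (arc_outP HP Xx).1.
case mx: (block_maxb L x).
  by exists (x + 1); apply/arcPE; right; split=> //; [apply/block_maxP | apply/block_minP].
have [j a] := (arc_outP HL Xx).2 (negbT mx).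
exists j; apply/arcPE; left; split=> // ej; subst j.
by case/negP: ((arc_inP HL Xx1).1 (ex_intro _ x a)).
Qed.

Lemma block_maxb_plus_last x :
  X x -> ~~ X (x + 1) -> block_maxb P x = block_maxb L x.
Proof.
move=> Xx nXx1; apply: negb_inj; apply/idP/idP.
  move/(arc_outP HP Xx).2 => [j /arcPE [[a _]|[ej _ Xj _ _]]].
    exact: (arc_outP HL Xx).1 (ex_intro _ j a).
  by move: nXx1; rewrite -ej Xj.
move/(arc_outP HL Xx).2 => [j a]; apply/(arc_outP HP Xx).1.
exists j; apply/arcPE; left; split=> // ej.
by have [_] := arc_dom HL a; rewrite ej (negbTE nXx1).
Qed.

Lemma count_plus_segment a m :
  (forall x, a <= x <= a + m%:Z -> X x) -> ~~ X (a + m%:Z + 1) ->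
  (count (block_maxb P) (iotaz a m.+1) + count (block_minb L) (iotaz a m.+1)
   = m + block_minb L a + block_maxb L (a + m%:Z)%R)%N.
Proof.
move=> Xseg nXend; rewrite count_iotaz_succ => [|x axm].
  by rewrite block_maxb_plus_last // Xseg //; lia.
by apply: block_maxb_plus_succ; apply: Xseg; lia.
Qed.

End PlusPartition.

Lemma NCDt_arc_succ n L :
  in_NCDt n L -> forall x i j, is_arc L x j -> is_arc L i (x + 1) -> j = x + 1.
Proof.
case=> [[HL _] NC] x i j xj ix1.
case: (eqVneq i x) => [ix|]; first by rewrite ix in ix1; exact (arc_functional HL xj ix1).
case: (eqVneq j (x + 1)) => // jx1 ix.
have lt_xj : x < j by case: xj => B _ [].
have lt_ix1 : i < x + 1 by case: ix1 => B _ [].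
by have [_] := NC i x (x + 1) j ix1 xj ltac:(lia) ltac:(lia) ltac:(lia); lia.
Qed.

Lemma PiD_block_minb_opp n L x :
  in_PiD n L -> in_pm n x -> block_minb L (- x) = block_maxb L x.
Proof.
case=> HL sym Xx; have Xnx : in_pm n (- x) by move: Xx; rewrite /in_pm; lia.
apply: negb_inj; apply/idP/idP.
  move/(arc_inP HL Xnx).2 => [i /sym]; rewrite opprK => a.
  by apply/(arc_outP HL Xx).1; exists (- i).
move/(arc_outP HL Xx).2 => [j /sym a].
by apply/(arc_inP HL Xnx).1; exists (- j).
Qed.

Unset Implicit Arguments.
Theorem corollary5p2 (n : nat) (L : spart) :
  (1 <= n)%N -> in_NCDt n L ->
  (exists2 P : spart, is_partition P (in_pm n) &
     forall i j, is_arc P i j <-> plus_arc (in_pm n) L i j) /\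
  (forall P : spart, is_partition P (in_pm n) ->
     (forall i j, is_arc P i j <-> plus_arc (in_pm n) L i j) ->
     (is_block_max L (-1) -> #|` P|%:Z = ((2 * n + 2)%:Z - #|` L|%:Z)%R) /\
     (~ is_block_max L (-1) -> #|` P|%:Z = ((2 * n)%:Z - #|` L|%:Z)%R)).
Proof.
case: n => [//|n] _ HNC; have [[HL _] _] := HNC.
pose Xs := iotaz (- n.+1%:Z) n.+1 ++ iotaz 1 n.+1.
have XsE x : in_pm n.+1 x = (x \in Xs) by rewrite mem_cat !mem_iotaz /in_pm; lia.
have sorted_Xs : sorted <%R Xs.
  by apply: (@path_sorted _ _ (- n.+2%:Z)); apply: path_iotaz_cat; lia.
have uniq_Xs : uniq Xs by apply: sorted_uniq sorted_Xs; [apply: lt_trans | apply: ltxx].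
split; first exact: exists_plus_partition HL sorted_Xs XsE.
move=> P HP arcPE.
have min_first : block_minb L (- n.+1%:Z).
  by apply: (block_minb_min HL) => [|y]; rewrite /in_pm; lia.
have max_last : block_maxb L (1 + n%:Z).
  by apply: (block_maxb_max HL) => [|y]; rewrite /in_pm; lia.
have min_one : block_minb L 1 = block_maxb L (-1).
  by rewrite -(PiD_block_minb_opp HNC.1) ?opprK // /in_pm; lia.
have card_sum : (#|` P| + #|` L| = 2 * n.+1 + 2 * block_maxb L (-1))%N.
  rewrite (card_block_max HP uniq_Xs XsE) (card_block_min HL uniq_Xs XsE) !count_cat addnACA.
  rewrite !(count_plus_segment HL HP arcPE (NCDt_arc_succ HNC));
    try by move=> *; rewrite /in_pm; lia.
  rewrite (_ : - n.+1%:Z + n%:Z = -1) ?min_first ?max_last ?min_one; last by lia.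
  by case: (block_maxb L (-1)) => /=; lia.
by case: (block_maxP L (-1)) card_sum => mx /= card_sum; split=> // _; lia.
Qed.
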